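(* Let $D$ be a square-free integer, $p$ an odd prime, $k,\ell$ positive integers and $c_D$ a positive integer with $\gcd(c_D k, p) = 1$. Let $N = c_D k p^{\ell} - 1$ be an odd integer such that $c_D k < p^{\ell}$ and the Jacobi symbol satisfies $\left(\frac{D}{N}\right) = -1$. Suppose that there exists an element $w \in \mathcal{G}_N(D)$ such that $w^{\frac{N+1}{p}} \not\equiv 1 \pmod{N}$. Then $N$ is prime if and only if $$\Phi_p\left(w^{\frac{N+1}{p}}\right) \equiv 0 \pmod{N},$$ where $\Phi_p(x)$ denotes the $p$-th cyclotomic polynomial.
   Context: For an integer $n \ge 2$ and a square-free integer $D$: if $D \equiv 2,3 \pmod 4$, let $\mathcal{I}_n(D) = \{a + b\sqrt{D} : a,b \in \mathbb{Z}/n\mathbb{Z}\}$ (the ring $\mathbb{Z}[\sqrt D]/n\mathbb{Z}[\sqrt D]$) and $\mathcal{G}_n(D) = \{a + b\sqrt{D} \in \mathcal{I}_n(D) : a^2 - Db^2 \equiv 1 \pmod n\}$; if $D \equiv 1 \pmod 4$, let $\omega = \frac{1+\sqrt D}{2}$, $\mathcal{I}_n(D) = \{a + b\omega : a,b \in \mathbb{Z}/n\mathbb{Z}\}$ (the ring $\mathbb{Z}[\omega]/n\mathbb{Z}[\omega]$) and $\mathcal{G}_n(D) = \{a + b\omega \in \mathcal{I}_n(D) : a^2 + ab + \frac{1-D}{4} b^2 \equiv 1 \pmod n\}$. In both cases $\mathcal{I}_n(D)$ is the quotient ring $\mathcal{O}_L/n\mathcal{O}_L$ for $L=\mathbb{Q}(\sqrt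 D)$, $\mathcal{G}_n(D)$ is a multiplicative group, powers are computed in $\mathcal{I}_n(D)$, and a congruence $x \equiv y \pmod n$ for $x,y \in \mathcal{I}_n(D)$ means $x = y$ in $\mathcal{I}_n(D)$; polynomials such as $\Phi_p$ are evaluated in $\mathcal{I}_n(D)$. *)

From mathcomp Require Import all_boot all_order all_algebra all_field.
Set Implicit Arguments. Unset Strict Implicit. Unset Printing Implicit Defensive.
Import Order.TTheory GRing.Theory Num.Theory.
Local Open Scope ring_scope.

(* Square-free integer: no square of a prime divides D (this excludes D = 0). *)
Definition squarefree_int (D : int) : Prop :=
  forall p : nat, prime p -> ~ ((p * p)%N %| D)%Z.

Definition legendre (a : int) (p : nat) : int :=
  if (p %| a)%Z then 0
  else if [exists x : 'I_p, ((x%:Z) ^+ 2 == a %[mod p])%Z] then 1 else -1.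

Definition jacobi (a : int) (n : nat) : int :=
  \prod_(q <- primes n) legendre a q ^+ logn q n.

(* Elements of I_n(D) = O_L / n O_L, represented by integer pairs (a, b)
   standing for a + b*sqrt D (D = 2,3 mod 4) or a + b*omega (D = 1 mod 4),
   omega = (1 + sqrt D)/2; equality in I_n(D) is componentwise congruence mod n. *)
Definition Ielt := (int * int)%type.

Definition D1mod4 (D : int) : bool := (D %% 4 == 1)%Z.

Definition Imul (D : int) (x y : Ielt) : Ielt :=
  let: (a, b) := x in let: (c, d) := y in
  if D1mod4 D then (a * c + b * d * ((D - 1) %/ 4)%Z, a * d + b * c + b * d)
  else (a * c + D * b * d, a * d + b * c).

Definition Iadd (x y : Ielt) : Ielt := (x.1 + y.1, x.2 + y.2).

Definition Ielt_one : Ielt := (1, 0).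
Definition Ielt_zero : Ielt := (0, 0).

Definition Ipow (D : int) (x : Ielt) (e : nat) : Ielt := iter e (Imul D x) Ielt_one.

Definition Iscale (c : int) (x : Ielt) : Ielt := (c * x.1, c * x.2).

Definition Ieval (D : int) (q : {poly int}) (x : Ielt) : Ielt :=
  foldr Iadd Ielt_zero [seq Iscale q`_i (Ipow D x i) | i <- iota 0 (size q)].

Definition Icong (n : nat) (x y : Ielt) : Prop :=
  (x.1 = y.1 %[mod n])%Z /\ (x.2 = y.2 %[mod n])%Z.

Definition Inorm (D : int) (x : Ielt) : int :=
  let: (a, b) := x in
  if D1mod4 D then a ^+ 2 + a * b + ((1 - D) %/ 4)%Z * b ^+ 2
  else a ^+ 2 - D * b ^+ 2.

Definition inG (n : nat) (D : int) (w : Ielt) : Prop :=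
  (Inorm D w = 1 %[mod n])%Z.

(* Let q be a prime divisor of N. Reducing modulo q maps I_N(D) onto the quadratic algebra
   F_q[theta], in which the Frobenius x |-> x^q is the identity, the conjugation, or a map onto
   F_q, according as the discriminant (D or 4D) is a nonzero square, a non-square, or zero.
   Hence an element y of norm 1 satisfies y^(q-1) = 1, y^(q+1) = 1 or y^(2q) = 1.
   If Phi_p(x) = 0 for x = y^((N+1)/p), then x is a p-th root of unity different from 1, so
   p^l divides the order of y and therefore one of q-1, q+1, 2q; this forces q > p^l, and as
   N < p^(2l) the number N cannot have two such prime factors.
   Conversely, if N is prime and (D/N) = -1, the Frobenius is the conjugation, so y^(N+1) = 1,
   and F_N[theta] is a field, so the root x <> 1 of X^p - 1 is a root of Phi_p. *)

From HB Require Import structures.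
From mathcomp Require Import all_boot all_order all_algebra all_field.
From mathcomp Require Import cyclic ring zify.
Set Implicit Arguments. Unset Strict Implicit. Unset Printing Implicit Defensive.
Import GRing.Theory.
Local Open Scope ring_scope.

Lemma odd_prime_gt2 p : prime p -> odd p -> (2 < p)%N.
Proof. by move=> p_pr; rewrite ltn_neqAle prime_gt1 // andbT; apply: contraTneq => <-. Qed.

Lemma odd_prime_expn_gt2 p l : prime p -> odd p -> (0 < l)%N -> (2 < p ^ l)%N.
Proof.
move=> p_pr p_odd l_gt0; apply: leq_trans (odd_prime_gt2 p_pr p_odd) _.
by rewrite -{1}(expn1 p) leq_pexp2l // prime_gt0.
Qed.

Lemma odd_pred_half n : odd n -> n.-1 = (n./2 * 2)%N.
Proof. by move=> n_odd; have := odd_double_half n; rewrite n_odd -mul2n; lia. Qed.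

Lemma expr_gcdn_eq1 (R : pzSemiRingType) (y : R) a b :
  (0 < a)%N -> y ^+ a = 1 -> y ^+ b = 1 -> y ^+ gcdn a b = 1.
Proof.
move=> a_gt0 ya yb; have [u _ /dvdnP[k k_eq]] := Bezoutl b a_gt0.
have : y ^+ (gcdn a b + u * b) = 1 by rewrite k_eq mulnC exprM ya expr1n.
by rewrite exprD mulnC exprM yb expr1n mulr1.
Qed.

Lemma pfactor_dvdn_of_ndvdn (d M p l : nat) : prime p -> coprime M p ->
  (d %| M * p ^ l)%N -> ~~ (d %| M * p ^ l.-1)%N -> (p ^ l %| d)%N.
Proof.
move=> p_pr Mp d_dvd; apply: contraNT => pl_ndvd.
have M_gt0 : (0 < M)%N.
  by rewrite lt0n; apply: contraTneq Mp => ->; rewrite /coprime gcd0n neq_ltn prime_gt1 ?orbT.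
have d_gt0 : (0 < d)%N by apply: dvdn_gt0 d_dvd; rewrite muln_gt0 M_gt0 expn_gt0 prime_gt0.
rewrite -(partnC p d_gt0) mulnC dvdn_mul //.
  have dp'_coprime : coprime d`_p^' (p ^ l).
    by rewrite coprime_sym coprimeXl // (pnat_coprime (pnat_id p_pr)) ?part_pnat.
  by rewrite -(Gauss_dvdl _ dp'_coprime); apply: dvdn_trans d_dvd; apply: dvdn_part.
rewrite p_part dvdn_exp2l //; move: pl_ndvd; rewrite pfactor_dvdn //; lia.
Qed.

Lemma order_pfactor_dvdn (R : pzSemiRingType) (y : R) (M p l e : nat) :
  prime p -> coprime M p -> y ^+ (M * p ^ l) = 1 -> y ^+ (M * p ^ l.-1) != 1 ->
  (0 < e)%N -> y ^+ e = 1 -> (p ^ l %| e)%N.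
Proof.
move=> p_pr Mp y_Mpl y_Mpl' e_gt0 ye; apply: dvdn_trans (dvdn_gcdl e (M * p ^ l)).
apply: pfactor_dvdn_of_ndvdn Mp (dvdn_gcdr _ _) _ => //.
apply: contraNN y_Mpl' => /dvdnP[k ->].
by rewrite mulnC exprM expr_gcdn_eq1 ?expr1n.
Qed.

Lemma sum_expr_eq0 (R : pzRingType) (x : R) n :
  n%:R != 0 :> R -> \sum_(i < n) x ^+ i = 0 -> x ^+ n = 1 /\ x != 1.
Proof.
move=> n_neq0 sum0; split; first by apply/eqP; rewrite -subr_eq0 subrX1 sum0 mulr0.
apply: contraNneq n_neq0 => x1; rewrite -sum0 x1.
by rewrite (eq_bigr (fun=> 1)) => [|i _]; rewrite ?expr1n // sumr_const card_ord.
Qed.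

Lemma lt_of_dvdn_pred_succ_double (a q : nat) :
  odd a -> (2 < a)%N -> (1 < q)%N -> odd q -> coprime a q ->
  [\/ (a %| q.-1)%N, (a %| q.+1)%N | (a %| q * 2)%N] -> (a < q)%N.
Proof.
move=> a_odd a_gt2 q_gt1 q_odd aq [a_dvd|a_dvd|].
- by have := dvdn_leq (_ : 0 < q.-1)%N a_dvd; lia.
- have : (a * 2 %| q.+1)%N by rewrite Gauss_dvd ?coprimen2 // a_dvd dvdn2 /= q_odd.
  by move/(dvdn_leq (ltn0Sn q)); lia.
- by rewrite Gauss_dvdr // => /(dvdn_leq (isT : 0 < 2)%N); lia.
Qed.

Lemma large_prime_divisors_prime (n b : nat) : (1 < n)%N -> (n < b ^ 2)%N ->
  (forall q, prime q -> (q %| n)%N -> (b <= q)%N) -> prime n.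
Proof.
move=> n_gt1 n_lt pdiv_ge; apply: contraT => /primePns[|[q [q_pr q_sq q_dvd]]]; first lia.
by have := pdiv_ge q q_pr q_dvd; rewrite -leq_sqr; lia.
Qed.

Lemma eqz_mod_dvdn (q N : nat) (a b : int) :
  (q %| N)%N -> (a = b %[mod N])%Z -> (a = b %[mod q])%Z.
Proof.
move=> q_dvd /eqP; rewrite eqz_mod_dvd => N_dvd; apply/eqP; rewrite eqz_mod_dvd.
by apply: dvdz_trans N_dvd; rewrite dvdzE.
Qed.

Lemma jacobi_prime (a : int) n : prime n -> jacobi a n = legendre a n.
Proof. by move=> n_pr; rewrite /jacobi primes_prime // big_seq1 logn_prime // eqxx expr1. Qed.

(* [quad c0 c1] is [F[theta] / (theta ^ 2 - c1 theta - c0)]; the pair [(a, b)] stands for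
   [a + b theta]. *)
Definition quad (F : comNzRingType) (c0 c1 : F) : Type := (F * F)%type.

Section Quadratic.
Variables (F : comNzRingType) (c0 c1 : F).
Local Notation Q := (quad c0 c1).

HB.instance Definition _ := GRing.Zmodule.on Q.

Definition quad_scale (a : F) (x : Q) : Q := (a * x.1, a * x.2).

Fact quad_scaleA a b x : quad_scale a (quad_scale b x) = quad_scale (a * b) x.
Proof. by congr pair; rewrite /= mulrA. Qed.
Fact quad_scale1 : left_id 1 quad_scale.
Proof. by case=> a b; congr pair; rewrite /= mul1r. Qed.
Fact quad_scaleDr : right_distributive quad_scale +%R.
Proof. by move=> a [? ?] [? ?]; congr pair; rewrite /= mulrDr. Qed.
Fact quad_scaleDl x : {morph quad_scale^~ x : a b / a + b}.
Proof. by move=> a b; congr pair; rewrite /= mulrDl. Qed.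

HB.instance Definition _ := GRing.Zmodule_isLmodule.Build F Q
  quad_scaleA quad_scale1 quad_scaleDr quad_scaleDl.

Definition quad_mul (x y : Q) : Q :=
  (x.1 * y.1 + c0 * x.2 * y.2, x.1 * y.2 + x.2 * y.1 + c1 * x.2 * y.2).

Fact quad_mulA : associative quad_mul.
Proof. by move=> [a b] [c d] [e f]; congr pair => /=; ring. Qed.
Fact quad_mulC : commutative quad_mul.
Proof. by move=> [a b] [c d]; congr pair => /=; ring. Qed.
Fact quad_mul1 : left_id (1, 0) quad_mul.
Proof. by move=> [a b]; congr pair => /=; ring. Qed.
Fact quad_mulDl : left_distributive quad_mul +%R.
Proof. by move=> [a b] [c d] [e f]; congr pair => /=; ring. Qed.
Fact quad1_neq0 : ((1, 0) : Q) != 0.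
Proof. by apply/eqP => -[/eqP]; rewrite oner_eq0. Qed.

HB.instance Definition _ := GRing.Zmodule_isComNzRing.Build Q
  quad_mulA quad_mulC quad_mul1 quad_mulDl quad1_neq0.

Fact quad_scalerAl (a : F) (x y : Q) : a *: (x * y) = (a *: x) * y.
Proof. by case: x y => [? ?] [? ?]; congr pair => /=; ring. Qed.

HB.instance Definition _ := GRing.Lmodule_isLalgebra.Build F Q quad_scalerAl.
HB.instance Definition _ := GRing.Lalgebra_isComAlgebra.Build F Q.

Lemma quad_mulE (x y : Q) :
  x * y = (x.1 * y.1 + c0 * x.2 * y.2, x.1 * y.2 + x.2 * y.1 + c1 * x.2 * y.2).
Proof. by []. Qed.

Lemma quad_algE (a : F) : a%:A = (a, 0) :> Q.
Proof. by congr pair; rewrite /= ?mulr1 ?mulr0. Qed.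

Definition quad_conj (x : Q) : Q := (x.1 + c1 * x.2, - x.2).

Definition quad_norm (x : Q) : F := x.1 ^+ 2 + c1 * x.1 * x.2 - c0 * x.2 ^+ 2.

Lemma quad_mul_conj (x : Q) : x * quad_conj x = (quad_norm x)%:A.
Proof. by rewrite quad_mulE quad_algE /quad_norm; congr pair => /=; ring. Qed.

Definition quad_disc : F := c1 ^+ 2 + 4 * c0.

Lemma quad_norm_disc (x : Q) :
  4 * quad_norm x = (2 * x.1 + c1 * x.2) ^+ 2 - quad_disc * x.2 ^+ 2.
Proof. by rewrite /quad_norm /quad_disc; ring. Qed.

End Quadratic.



Section PrimeField.
Variables (q : nat) (q_pr : prime q) (q_odd : odd q).
Local Notation F := 'F_q.

Lemma Fp_fermat (a : F) : a ^+ q = a.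
Proof. by rewrite -{2}(expf_card a) card_Fp. Qed.

Lemma Fp_expr_pred (a : F) : a != 0 -> a ^+ q.-1 = 1.
Proof.
by move=> a0; apply: (mulIf a0); rewrite mul1r -exprSr prednK ?prime_gt0 ?Fp_fermat.
Qed.


Lemma Fp2_neq0 : (2 : F) != 0.
Proof.
rewrite -(dvdn_pcharf (pchar_Fp q_pr)) dvdn_prime2 //.
by apply: contraTneq q_odd => ->.
Qed.

Lemma Fp_expr_half_sign (d : F) : d != 0 -> (d ^+ q./2 == 1) || (d ^+ q./2 == -1).
Proof. by move=> d0; rewrite -sqrf_eq1 -exprM -(odd_pred_half q_odd) Fp_expr_pred. Qed.

Lemma Fp_euler_nonsquare (d : F) : (forall s : F, s ^+ 2 != d) -> d ^+ q./2 = -1.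
Proof.
move=> nsq; have d0 : d != 0 by apply: contraNneq (nsq 0) => ->; rewrite expr0n.
have q_gt2 := odd_prime_gt2 q_pr q_odd.
have [g g_prim] : exists g : F, (q.-1).-primitive_root g.
  have /hasP[g _ ?] : has (q.-1).-primitive_root (enum (predC1 (0 : F))).
    apply: has_prim_root; first lia.
    - by apply/allP => x; rewrite mem_enum unity_rootE => /Fp_expr_pred ->.
    - exact: enum_uniq.
    - by rewrite -cardE cardC1 card_Fp.
  by exists g.
have [[i _] /= d_gi] := prim_rootP g_prim (Fp_expr_pred d0).
case/orP: (Fp_expr_half_sign d0) => /eqP // d_half1; exfalso.
have i_even : ~~ odd i.
  apply: contraPN d_half1 => i_odd /eqP.
  rewrite d_gi -exprM -(prim_order_dvd g_prim) (odd_pred_half q_odd) [(i * _)%N]mulnC.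
  by rewrite dvdn_pmul2l ?dvdn2 ?i_odd //; move: (odd_pred_half q_odd); lia.
move: (nsq (g ^+ i./2)); rewrite -exprM d_gi.
by have := odd_double_half i; rewrite (negbTE i_even) -muln2 add0n => ->; rewrite eqxx.
Qed.

Lemma Fp_intr_eq (a b : int) : (a%:~R : F) = b%:~R <-> (a = b %[mod q])%Z.
Proof.
rewrite (rwP eqP); have := eqz_mod_dvd q a b.
rewrite (dvdz_pcharf (pchar_Fp q_pr)) rmorphB /= subr_eq0 => <-.
by split=> /eqP.
Qed.

Lemma legendre_nonsquare (D : int) : legendre D q = -1 -> forall s : F, s ^+ 2 != D%:~R.
Proof.
rewrite /legendre; case: ifP => // _; case: existsP => // nsq _ s.
apply: contra_notN nsq => /eqP s_sq; exists (Ordinal (ltn_pmod s (prime_gt0 q_pr))).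
apply/eqP/Fp_intr_eq; rewrite -s_sq rmorphXn /= -natz -/(_%:R).
by rewrite rmorph_nat (Fp_nat_mod q_pr) natr_Zp.
Qed.

Section Frobenius.
Variables c0 c1 : F.
Local Notation Q := (quad c0 c1).
Local Notation disc := (quad_disc c0 c1).
Local Notation e := (disc ^+ q./2).

Lemma quad_pchar : q \in [pchar Q].
Proof. by rewrite (pchar_lalg Q) pchar_Fp. Qed.

(* With [s = 2 theta - c1] we have [s ^ 2 = disc] and [2 x = (2 x.1 + c1 x.2) + x.2 s];
   the Frobenius fixes the scalars and maps [s] to [disc ^ ((q - 1) / 2) * s]. *)
Lemma quad_frobenius (x : Q) : 2 *: x ^+ q = (2 * x.1 + (1 - e) * c1 * x.2, 2 * e * x.2).
Proof.
pose s : Q := (- c1, 2).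
have q_eq : q = (2 * q./2).+1 by rewrite mulnC -(odd_pred_half q_odd) prednK ?prime_gt0.
have s_sq : s ^+ 2 = disc%:A.
  by rewrite expr2 quad_mulE quad_algE /quad_disc; congr pair => /=; ring.
have s_frob : s ^+ q = e *: s.
  have -> : s ^+ q = s * (s ^+ 2) ^+ q./2 by rewrite -exprM -exprS -q_eq.
  by rewrite s_sq exprZn expr1n mulrC mulr_algl.
have alg_frob (a : F) : (a%:A : Q) ^+ q = a%:A by rewrite exprZn expr1n Fp_fermat.
have two_x : 2 *: x = (2 * x.1 + c1 * x.2)%:A + x.2 *: s.
  by rewrite quad_algE; congr pair => /=; ring.
rewrite -{1}(Fp_fermat 2) -exprZn two_x exprDn_pchar; last first.
  by rewrite (eq_pnat _ (pcharf_eq quad_pchar)) pnat_id.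
rewrite alg_frob exprZn s_frob Fp_fermat quad_algE.
by congr pair => /=; ring.
Qed.

Lemma quad_frobenius_id (x : Q) : e = 1 -> x ^+ q = x.
Proof.
move=> e1; apply: (scalerI Fp2_neq0); rewrite quad_frobenius e1.
by case: x => a b; congr pair => /=; ring.
Qed.

Lemma quad_frobenius_conj (x : Q) : e = -1 -> x ^+ q = quad_conj x.
Proof.
move=> eN1; apply: (scalerI Fp2_neq0); rewrite quad_frobenius eN1.
by case: x => a b; congr pair => /=; ring.
Qed.

Lemma quad_frobenius_disc0 (x : Q) : disc = 0 -> 2 *: x ^+ q = (2 * x.1 + c1 * x.2)%:A.
Proof.
move=> d0; have e0 : e = 0.
  have : (0 < q./2)%N by move: (odd_pred_half q_odd) (prime_gt1 q_pr); lia.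
  by rewrite d0 expr0n; case: (q./2).
by rewrite quad_frobenius e0 quad_algE; congr pair => /=; ring.
Qed.

Lemma quad_norm1_frobenius_cases (x : Q) :
  quad_norm x = 1 -> [\/ x ^+ q.-1 = 1, x ^+ q.+1 = 1 | x ^+ (q * 2) = 1].
Proof.
move=> nx1; have x_conj : x * quad_conj x = 1 by rewrite quad_mul_conj nx1 scale1r.
have [d0|d_neq0] := eqVneq disc 0.
  constructor 3; apply: (scalerI Fp2_neq0); apply: (scalerI Fp2_neq0).
  have sq : (2 * x.1 + c1 * x.2) ^+ 2 = 4 * quad_norm x.
    by rewrite quad_norm_disc d0 mul0r subr0.
  rewrite exprM [LHS]scalerA -expr2 -exprZn quad_frobenius_disc0 //.
  by rewrite exprZn expr1n sq nx1 scalerA; congr (_ *: 1); ring.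
case/orP: (Fp_expr_half_sign d_neq0) => /eqP e_val.
  constructor 1; rewrite -[LHS]mulr1 -x_conj mulrA -exprSr prednK ?prime_gt0 //.
  by rewrite quad_frobenius_id.
by constructor 2; rewrite exprSr quad_frobenius_conj // mulrC.
Qed.

Lemma quad_norm_eq0 (x : Q) : (forall s : F, s ^+ 2 != disc) -> quad_norm x = 0 -> x = 0.
Proof.
move=> nsq nx0.
have sq : (2 * x.1 + c1 * x.2) ^+ 2 = disc * x.2 ^+ 2.
  by apply/eqP; rewrite -subr_eq0 -quad_norm_disc nx0 mulr0.
have [x2_0|x2_neq0] := eqVneq x.2 0.
  move: sq; rewrite x2_0 mulr0 addr0 expr0n mulr0 => /eqP.
  rewrite expf_eq0 /= mulf_eq0 (negbTE Fp2_neq0) /= => /eqP x1_0.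
  by case: x {nx0} x1_0 x2_0 => a b /= -> ->.
case/negP: (nsq ((2 * x.1 + c1 * x.2) / x.2)).
by rewrite expr_div_n sq mulfK // expf_neq0.
Qed.

Lemma quad_mulf_eq0 (x y : Q) :
  (forall s : F, s ^+ 2 != disc) -> (x * y == 0) = (x == 0) || (y == 0).
Proof.
move=> nsq; apply/idP/idP => [xy0|/orP[]/eqP->]; rewrite ?mul0r ?mulr0 //.
have : (quad_norm x)%:A * y == 0 by rewrite -quad_mul_conj mulrAC (eqP xy0) mul0r.
rewrite mulr_algl scaler_eq0 => /orP[/eqP/(quad_norm_eq0 nsq)->|->]; rewrite ?eqxx ?orbT //.
Qed.

End Frobenius.

End PrimeField.

(* The generator [theta] of O_L ([sqrt D], or [omega] when [D = 1 mod 4]) satisfies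
   [theta ^ 2 = theta_c0 D + theta_c1 D * theta]. *)
Definition theta_c0 (D : int) : int := if D1mod4 D then ((D - 1) %/ 4)%Z else D.
Definition theta_c1 (D : int) : int := if D1mod4 D then 1 else 0.

Notation OLmod F D := (quad ((theta_c0 D)%:~R : F) (theta_c1 D)%:~R).

Lemma D1mod4_div4 (D : int) : D1mod4 D -> ((D - 1) %/ 4)%Z * 4 = D - 1.
Proof.
move=> /eqP D1; apply/eqP; rewrite -dvdz_eq; apply/dvdz_mod0P.
by rewrite -modzDml D1 subrr.
Qed.



Lemma Cyclotomic_prime p : prime p -> 'Phi_p = \poly_(i < p) 1.
Proof.
move=> p_pr; have p_gt0 := prime_gt0 p_pr.
have Phi1 : 'Phi_1 = 'X - 1.
  by have := prod_Cyclotomic (ltn0Sn 0); rewrite (_ : divisors 1 = [:: 1%N]) // big_seq1.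
have divisors_p : perm_eq (divisors p) [:: 1%N; p].
  apply: uniq_perm (divisors_uniq p) _ _ => [|d].
    by rewrite /= inE andbT neq_ltn prime_gt1.
  rewrite -dvdn_divisors // !inE; apply/idP/idP => [|/orP[]/eqP->//].
  by case/primeP: p_pr => _; apply.
have := prod_Cyclotomic p_gt0; rewrite (perm_big _ divisors_p) big_cons big_seq1 Phi1.
rewrite subrX1 poly_def => /(mulfI (monic_neq0 (monicXsubC 1))) ->.
by apply: eq_bigr => i _; rewrite scale1r.
Qed.

Section Reduction.
Variables (F : comNzRingType) (D : int).

Definition Ired (x : Ielt) : OLmod F D := (x.1%:~R, x.2%:~R).

Lemma Ired1 : Ired Ielt_one = 1.
Proof. by rewrite /Ired /= rmorph1 rmorph0. Qed.

Lemma Ired0 : Ired Ielt_zero = 0.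
Proof. by rewrite /Ired /= rmorph0. Qed.

Lemma Ired_mul (x y : Ielt) : Ired (Imul D x y) = Ired x * Ired y.
Proof.
case: x y => [a b] [c d]; rewrite quad_mulE /Ired /Imul /theta_c0 /theta_c1 /=.
by case: (D1mod4 D); congr pair; rewrite !(rmorphD, rmorphM, rmorph1, rmorph0) /=; ring.
Qed.

Lemma Ired_pow (x : Ielt) n : Ired (Ipow D x n) = Ired x ^+ n.
Proof.
elim: n => [|n IHn]; first by rewrite expr0 -Ired1.
by rewrite exprS -IHn -Ired_mul.
Qed.

Lemma Ired_eval (P : {poly int}) (x : Ielt) :
  Ired (Ieval D P x) = \sum_(i < size P) (P`_i)%:~R *: Ired x ^+ i.
Proof.
rewrite /Ieval -(big_mkord xpredT (fun i => (P`_i)%:~R *: Ired x ^+ i)).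
rewrite /index_iota subn0; elim: (iota 0 (size P)) => [|i s IHs].
  by rewrite big_nil -Ired0.
rewrite big_cons -IHs -Ired_pow /Ired /=.
by case: (Ipow D x i) => a b; congr pair; rewrite /= !rmorphD !rmorphM.
Qed.

Lemma Ired_norm (x : Ielt) : quad_norm (Ired x) = (Inorm D x)%:~R.
Proof.
case: x => a b; rewrite /quad_norm /Inorm /theta_c0 /theta_c1 /=.
case D1: (D1mod4 D); last by rewrite !(rmorphB, rmorphD, rmorphM, rmorphXn) /=; ring.
have ->: ((1 - D) %/ 4)%Z = - ((D - 1) %/ 4)%Z.
  by rewrite -opprB -{1}(D1mod4_div4 D1) -mulNr mulzK.
by rewrite !(rmorphD, rmorphM, rmorphN, rmorphXn, rmorph1) /=; ring.
Qed.

Lemma OLmod_disc :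
  quad_disc ((theta_c0 D)%:~R : F) (theta_c1 D)%:~R = (if D1mod4 D then D else 4 * D)%:~R.
Proof.
rewrite /quad_disc /theta_c0 /theta_c1; case D1: (D1mod4 D).
  set k := ((D - 1) %/ 4)%Z; rewrite -[X in _ = X%:~R](subrK 1 D) -(D1mod4_div4 D1).
  by rewrite intrD intrM; ring.
by rewrite intrM; ring.
Qed.

Lemma Ired_Phi_prime p (x : Ielt) :
  prime p -> Ired (Ieval D 'Phi_p x) = \sum_(i < p) Ired x ^+ i.
Proof.
move=> p_pr; rewrite Ired_eval Cyclotomic_prime // size_poly_eq ?oner_eq0 //.
by apply: eq_bigr => i _; rewrite coef_poly ltn_ord scale1r.
Qed.

End Reduction.

Section ReductionModPrime.
Variables (q : nat) (q_pr : prime q) (D : int).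
Local Notation Ired := (@Ired 'F_q D).

Lemma Icong_Ired (x y : Ielt) : Icong q x y <-> Ired x = Ired y.
Proof.
rewrite /Icong /Ired; split=> [[/(Fp_intr_eq q_pr) -> /(Fp_intr_eq q_pr) ->] //|].
by case=> /(Fp_intr_eq q_pr) ? /(Fp_intr_eq q_pr).
Qed.

Lemma inG_Ired_norm (w : Ielt) : inG q D w -> quad_norm (Ired w) = 1.
Proof. by move=> /(Fp_intr_eq q_pr); rewrite Ired_norm rmorph1. Qed.

Lemma legendre_OLmod_nonsquare : odd q -> legendre D q = -1 ->
  forall s : 'F_q, s ^+ 2 != quad_disc ((theta_c0 D)%:~R) ((theta_c1 D)%:~R).
Proof.
move=> q_odd /(legendre_nonsquare q_pr) nsq s; rewrite OLmod_disc.
case: (D1mod4 D); first exact: nsq.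
apply: contraNneq (nsq (s / 2)) => s_sq.
have four : (4%:~R : 'F_q) = 2 ^+ 2 by ring.
by rewrite expr_div_n s_sq intrM four [_ * D%:~R]mulrC mulfK // expf_neq0 // Fp2_neq0.
Qed.

End ReductionModPrime.

Lemma Phi_cong_of_prime (D : int) (N p m : nat) (w : Ielt) :
  prime N -> odd N -> prime p -> legendre D N = -1 -> inG N D w -> (m * p = N + 1)%N ->
  ~ Icong N (Ipow D w m) Ielt_one -> Icong N (Ieval D 'Phi_p (Ipow D w m)) Ielt_zero.
Proof.
move=> N_pr N_odd p_pr DN inGw mp_eq.
rewrite !(Icong_Ired N_pr D) Ired_Phi_prime // Ired_pow Ired1 Ired0 => /eqP x_neq1.
set y := Ired 'F_N D w in x_neq1 *.
have nsq := legendre_OLmod_nonsquare N_pr N_odd DN.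
have y_order : y ^+ N.+1 = 1.
  rewrite exprS quad_frobenius_conj ?Fp_euler_nonsquare //.
  by rewrite quad_mul_conj inG_Ired_norm // scale1r.
have : (y ^+ m - 1) * \sum_(i < p) (y ^+ m) ^+ i == 0.
  by rewrite -subrX1 -exprM mp_eq addn1 y_order subrr.
by rewrite quad_mulf_eq0 // subr_eq0 (negbTE x_neq1) => /eqP.
Qed.

Lemma prime_divisor_gt_of_Phi_cong (D : int) (N p l M q : nat) (w : Ielt) :
  prime p -> odd p -> (0 < l)%N -> coprime M p -> (N + 1 = M * p ^ l)%N -> odd N ->
  prime q -> (q %| N)%N -> inG N D w ->
  Icong N (Ieval D 'Phi_p (Ipow D w (M * p ^ l.-1))) Ielt_zero -> (p ^ l < q)%N.
Proof.
move=> p_pr p_odd l_gt0 Mp N1_eq N_odd q_pr q_dvd inGw [Phi_cong1 Phi_cong2].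
have pl_eq : (p ^ l = p ^ l.-1 * p)%N by rewrite -expnSr prednK.
have q_odd : odd q by case: (even_prime q_pr) q_dvd => [->|//]; rewrite dvdn2 N_odd.
have p_neq_q : p != q.
  apply: contraTneq q_dvd => <-; apply/negP => p_dvd.
  have : (p %| N + 1)%N by rewrite N1_eq pl_eq mulnA dvdn_mull.
  by rewrite dvdn_addr // dvdn1 => /eqP p1; move: p_pr; rewrite p1.
have : Icong q (Ieval D 'Phi_p (Ipow D w (M * p ^ l.-1))) Ielt_zero.
  by split; apply: eqz_mod_dvdn q_dvd _.
rewrite (Icong_Ired q_pr D) Ired_Phi_prime // Ired_pow Ired0.
set y := Ired 'F_q D w => sum0.
have p_neq0 : p%:R != 0 :> OLmod 'F_q D.
  by rewrite -(dvdn_pcharf (quad_pchar q_pr _ _)) dvdn_prime2 // eq_sym.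
have [x_order x_neq1] := sum_expr_eq0 p_neq0 sum0.
have y_order : y ^+ (M * p ^ l) = 1 by rewrite pl_eq mulnA exprM x_order.
have pl_dvd := order_pfactor_dvdn p_pr Mp y_order x_neq1.
apply: lt_of_dvdn_pred_succ_double.
- by rewrite oddX p_odd orbT.
- exact: odd_prime_expn_gt2.
- exact: prime_gt1.
- exact: q_odd.
- by rewrite coprimeXl // prime_coprime // dvdn_prime2.
case: (quad_norm1_frobenius_cases q_pr q_odd (inG_Ired_norm q_pr (eqz_mod_dvdn q_dvd inGw))).
- by move=> y1; constructor 1; apply: pl_dvd y1; rewrite ltn_predRL prime_gt1.
- by move=> y1; constructor 2; apply: pl_dvd y1.
- by move=> y1; constructor 3; apply: pl_dvd y1; rewrite muln_gt0 prime_gt0.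
Qed.

Theorem theorem1p1 (D : int) (p k l cD : nat) (w : Ielt) :
  squarefree_int D -> prime p -> odd p -> (0 < k)%N -> (0 < l)%N -> (0 < cD)%N ->
  coprime (cD * k) p ->
  let N := (cD * k * p ^ l - 1)%N in
  odd N -> (cD * k < p ^ l)%N -> jacobi D N = -1 ->
  inG N D w ->
  ~ Icong N (Ipow D w ((N + 1) %/ p)) Ielt_one ->
  (prime N <-> Icong N (Ieval D 'Phi_p (Ipow D w ((N + 1) %/ p))) Ielt_zero).
Proof.
move=> _ p_pr p_odd k_gt0 l_gt0 cD_gt0 Mp N N_odd M_lt DN inGw.
have N1_eq : (N + 1 = cD * k * p ^ l)%N.
  by rewrite /N addn1 subn1 prednK // !muln_gt0 cD_gt0 k_gt0 expn_gt0 prime_gt0.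
clearbody N; set M := (cD * k)%N in Mp M_lt N1_eq.
have M_gt0 : (0 < M)%N by rewrite muln_gt0 cD_gt0.
have pl_gt2 := odd_prime_expn_gt2 p_pr p_odd l_gt0.
have pl_eq : (p ^ l = p ^ l.-1 * p)%N by rewrite -expnSr prednK.
rewrite N1_eq pl_eq mulnA mulnK ?prime_gt0 //.
split=> [N_pr | Phi_cong].
  apply: Phi_cong_of_prime => //; last by rewrite N1_eq pl_eq mulnA.
  by rewrite -jacobi_prime.
apply: (@large_prime_divisors_prime _ (p ^ l).+1); [nia | nia |].
by move=> q q_pr q_dvd; apply: prime_divisor_gt_of_Phi_cong Phi_cong.
Qed.
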